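(* Every $g=(A,v)\in\mathrm{Aff}(n,\mathbb{C})$ with $|\det A|=1$ is a product of at most four coninvolutions in $\mathrm{Aff}(n,\mathbb{C})$.
   Context: $\mathrm{Aff}(n,\mathbb{C})$ is the group of affine maps $z\mapsto Az+v$ of $\mathbb{C}^n$, written $g=(A,v)$ with $A\in\mathrm{GL}(n,\mathbb{C})$, $v\in\mathbb{C}^n$; the product is composition, $(A,v)(B,w)=(AB,Aw+v)$, and the identity is $e=(I_n,0)$. For $g=(A,v)$ set $\overline{g}=(\overline{A},\overline{v})$ (entrywise complex conjugation). An element $h$ is a coninvolution if $h\overline{h}=e$. *)

From HB Require Import structures.
From mathcomp Require Import all_boot all_order all_algebra.
From mathcomp Require Import complex.
From mathcomp Require Import reals.
Set Implicit Arguments. Unset Strict Implicit. Unset Printing Implicit Defensive.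
Import Order.TTheory GRing.Theory Num.Theory.
Local Open Scope ring_scope.
Local Open Scope complex_scope.

Section Aff.
Variable (R : realType) (n : nat).
Local Notation C := (R[i]).

(* an element (A, v) of Aff(n,C) stands for z |-> A z + v *)
Definition aff := ('M[C]_n * 'cV[C]_n)%type.

Definition in_Aff (g : aff) : bool := g.1 \in unitmx.

Definition aff_mul (g h : aff) : aff := (g.1 *m h.1, g.1 *m h.2 + g.2).

Definition aff_one : aff := (1%:M, 0).

Definition aff_conj (g : aff) : aff :=
  (map_mx Num.conj g.1, map_mx Num.conj g.2).

Definition coninvolution (h : aff) : Prop := aff_mul h (aff_conj h) = aff_one.

Definition aff_prod (hs : seq aff) : aff := foldr aff_mul aff_one hs.
End Aff.

From HB Require Import structures.
From mathcomp Require Import all_boot all_order all_algebra.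
From mathcomp Require Import complex.
From mathcomp Require Import reals.
From mathcomp Require Import ring.

(* If b is a coninvolution and x is invertible, then x b x^-1 is the product of
   the two coninvolutions x conj(x^-1) and conj(x) b x^-1.  Diagonal matrices
   with unimodular entries are coninvolutions, so it suffices to write
   (A, v) = (X, 0) (Y, w) with X and Y diagonalizable with unimodular
   eigenvalues and 1 not an eigenvalue of Y: then (Y, w) is conjugate to (Y, 0)
   by a translation.
   When |det A| = 1 such X and Y exist.  A shear similarity makes the corner
   entry of A unimodular (scalar matrices are trivial), and recursion on the
   Schur complement shows that A is similar to L U, with L lower and U upper
   triangular with unimodular diagonals.  Each pivot may be split as z * (a/z)
   for any unimodular z; choosing z outside a finite set makes both diagonals
   injective and keeps 1 off the diagonal of U, so L and U are diagonalizable. *)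

Set Implicit Arguments.
Unset Strict Implicit.
Unset Printing Implicit Defensive.

Import Order.TTheory GRing.Theory Num.Theory.
Local Open Scope ring_scope.

Section AffineGroup.
Variables (R : realType) (n : nat).
Local Notation aff := (aff R n).
Local Notation one := (aff_one R n).
Implicit Types g h x b : aff.

Lemma aff_mulA g h x : aff_mul g (aff_mul h x) = aff_mul (aff_mul g h) x.
Proof. by rewrite /aff_mul /= mulmxA mulmxDr mulmxA addrA. Qed.

Lemma aff_mul1g g : aff_mul one g = g.
Proof. by case: g => A v; rewrite /aff_mul /= !mul1mx addr0. Qed.

Lemma aff_mulg1 g : aff_mul g one = g.
Proof. by case: g => A v; rewrite /aff_mul /= mulmx1 mulmx0 add0r. Qed.

Lemma aff_conjM g h : aff_conj (aff_mul g h) = aff_mul (aff_conj g) (aff_conj h).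
Proof. by rewrite /aff_conj /aff_mul /= map_mxD !map_mxM. Qed.

Lemma aff_conjK g : aff_conj (aff_conj g) = g.
Proof.
by case: g => A v; congr pair; apply/matrixP => i j; rewrite !mxE conjCK.
Qed.

Lemma aff_conj1 : aff_conj one = one.
Proof. by rewrite /aff_conj /= map_mx1 map_mx0. Qed.

Definition aff_inv g : aff := (invmx g.1, - (invmx g.1 *m g.2)).

Lemma aff_mulVg g : in_Aff g -> aff_mul (aff_inv g) g = one.
Proof. by move=> gu; rewrite /aff_mul /= mulVmx // subrr. Qed.

Lemma aff_mulgV g : in_Aff g -> aff_mul g (aff_inv g) = one.
Proof. by move=> gu; rewrite /aff_mul /= mulmxV // mulmxN mulKVmx // addNr. Qed.

Lemma coninvolution_Aff h : coninvolution h -> in_Aff h.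
Proof. by case=> /mulmx1_unit[]. Qed.

Definition coninvolution_prod2 g :=
  exists h1 h2, [/\ coninvolution h1, coninvolution h2 & aff_mul h1 h2 = g].

Lemma coninvolution_prod2_conjg x b : in_Aff x -> coninvolution b ->
  coninvolution_prod2 (aff_mul x (aff_mul b (aff_inv x))).
Proof.
move=> xu bb; set xi := aff_inv x.
have conj_xix : aff_mul (aff_conj xi) (aff_conj x) = one.
  by rewrite -aff_conjM aff_mulVg // aff_conj1.
exists (aff_mul x (aff_conj xi)), (aff_mul (aff_conj x) (aff_mul b xi)); split.
- rewrite /coninvolution aff_conjM aff_conjK -aff_mulA (aff_mulA (aff_conj xi)).
  by rewrite conj_xix aff_mul1g aff_mulgV.
- rewrite /coninvolution !aff_conjM !aff_conjK -!aff_mulA (aff_mulA xi).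
  rewrite aff_mulVg // aff_mul1g (aff_mulA b) bb aff_mul1g.
  by rewrite -aff_conjM aff_mulgV // aff_conj1.
- by rewrite -aff_mulA (aff_mulA (aff_conj xi)) conj_xix aff_mul1g.
Qed.

Lemma diag_coninvolution (d : 'rV[R[i]]_n) : (forall i, `|d 0 i| = 1) ->
  coninvolution ((diag_mx d, 0) : aff).
Proof.
move=> d1; rewrite /coninvolution /aff_mul /aff_one /= map_mx0 !mulmx0 addr0.
congr pair; apply/matrixP => i j; rewrite mul_diag_mx !mxE.
have [->|ij] := eqVneq i j; last by rewrite mulr0n rmorph0 mulr0.
by rewrite mulr1n -normCK d1 expr1n.
Qed.

End AffineGroup.

Lemma char_poly_trmx (R : comNzRingType) n (M : 'M[R]_n) : char_poly M^T = char_poly M.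
Proof.
by rewrite /char_poly -det_tr /char_poly_mx linearB /= tr_scalar_mx map_trmx trmxK.
Qed.

Section NumClosedFieldMatrices.
Variable C : numClosedFieldType.

Lemma sum_delta_mulE m (i j : 'I_m) (A : 'M[C]_m) r c :
  \sum_k delta_mx i j r k * A k c = (r == i)%:R * A j c.
Proof.
rewrite (bigD1 j) //= big1 ?addr0 => [|k kj]; rewrite !mxE ?eqxx ?andbT //.
by rewrite (negbTE kj) andbF mul0r.
Qed.

Lemma sum_mul_deltaE m (i j : 'I_m) (A : 'M[C]_m) r c :
  \sum_k A r k * delta_mx i j k c = A r i * (j == c)%:R.
Proof.
rewrite (bigD1 i) //= big1 ?addr0 => [|k ki]; rewrite !mxE ?eqxx /=.
  by rewrite eq_sym.
by rewrite (negbTE ki) mulr0.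
Qed.

Definition shear m (i j : 'I_m) (t : C) : 'M[C]_m := 1%:M + t *: delta_mx i j.

Lemma shearK m (i j : 'I_m) t : i != j -> shear i j t *m shear i j (- t) = 1%:M.
Proof.
move=> ij; rewrite /shear mulmxDl mul1mx mulmxDr mulmx1 -scalemxAl -scalemxAr.
by rewrite mul_delta_mx_0 1?eq_sym // !scaler0 addr0 scaleNr subrK.
Qed.

Lemma shear_unitmx m (i j : 'I_m) t : i != j -> shear i j t \in unitmx.
Proof. by move=> /(shearK t) /mulmx1_unit[]. Qed.

Definition shear_conj m (i j : 'I_m) t (A : 'M[C]_m) :=
  shear i j t *m A *m shear i j (- t).

Lemma shear_conjP m (i j : 'I_m) t A : i != j ->
  shear i j t *m A = shear_conj i j t A *m shear i j t.
Proof.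
move=> ij; rewrite /shear_conj -mulmxA.
by rewrite (mulmx1C (shearK t ij)) mulmx1.
Qed.

Lemma shear_conjE m (i j : 'I_m) t A r c : i != j ->
  shear_conj i j t A r c = A r c + t * ((r == i)%:R * A j c - A r i * (j == c)%:R)
                           - t ^+ 2 * ((r == i)%:R * A j i * (j == c)%:R).
Proof.
move=> ij; rewrite /shear_conj /shear mulmxDl mul1mx mulmxDr mulmx1 mulmxDl.
rewrite -!scalemxAr -!scalemxAl scalerA -mulmxA.
rewrite !mxE sum_delta_mulE sum_mul_deltaE.
under eq_bigr do rewrite [X in _ * X]mxE sum_mul_deltaE mulrA.
by rewrite -mulr_suml sum_delta_mulE; ring.
Qed.

Definition unit_corner_similar m (A : 'M[C]_m.+1) :=
  exists S B, [/\ S \in unitmx, S *m A = B *m S & `|B 0 0| = 1].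

Lemma unit_corner_similar_shear m (i j : 'I_m.+1) t A : i != j ->
  unit_corner_similar (shear_conj i j t A) -> unit_corner_similar A.
Proof.
move=> ij [S [B [Su SA B1]]]; exists (S *m shear i j t), B; split => //.
  by rewrite unitmx_mul Su shear_unitmx.
by rewrite -mulmxA shear_conjP // [LHS]mulmxA SA mulmxA.
Qed.

Lemma unit_corner_similar_row m (A : 'M[C]_m.+1) k : k != 0 -> A 0 k != 0 ->
  unit_corner_similar A.
Proof.
move=> k0 Ak; set t := (A 0 0 - 1) / A 0 k.
apply: (@unit_corner_similar_shear _ k 0 t) => //.
exists 1%:M, (shear_conj k 0 t A); split; rewrite ?unitmx1 ?mul1mx ?mulmx1 //.
rewrite shear_conjE // eqxx eq_sym (negbTE k0) /= -[RHS]normr1; congr `|_|.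
by rewrite /t; field.
Qed.

Lemma exists_quadratic_neq0 (p q : C) : (p != 0) || (q != 0) ->
  exists t : C, t * p - t ^+ 2 * q != 0.
Proof.
move=> pq0; have [p_q|/negPn/eqP p_q] := boolP (p - q != 0).
  by exists 1; rewrite expr1n !mul1r.
exists 2; apply: contraTneq pq0 => h2.
have pq : p = q by apply/eqP; rewrite -subr_eq0 p_q.
have /eqP : 2 * q = 0 by rewrite -[RHS]oppr0 -h2 pq; ring.
by rewrite mulf_eq0 pnatr_eq0 /= pq => /eqP ->; rewrite eqxx.
Qed.

Lemma unit_corner_similar_of_det m (A : 'M[C]_m.+1) : `|\det A| = 1 ->
  unit_corner_similar A.
Proof.
move=> detA.
have [/existsP[k /andP[k0 Ak]]|/existsPn row0] :=
  boolP [exists k, (k != 0) && (A 0 k != 0)].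
  exact: unit_corner_similar_row k0 Ak.
have {}row0 k : k != 0 -> A 0 k = 0.
  by move=> k0; move: (row0 k); rewrite k0 negbK => /eqP.
(* As the first row of A vanishes off the diagonal, the shear 1 + t e_0j
   turns the entry A 0 k into t * p j k - t ^+ 2 * q j k; A is scalar unless
   some p j k or q j k is nonzero. *)
pose p j k := A j k - A 0 0 * (j == k)%:R.
pose q j k := A j 0 * (j == k)%:R.
have [/existsP[[j k] /and3P[/= j0 k0 pq]]|/existsPn rest] :=
  boolP [exists jk : 'I_m.+1 * 'I_m.+1,
           [&& jk.1 != 0, jk.2 != 0 & (p jk.1 jk.2 != 0) || (q jk.1 jk.2 != 0)]].
  have [t tpq] := exists_quadratic_neq0 pq.
  have j0' : 0 != j by rewrite eq_sym.
  apply: (unit_corner_similar_shear (t := t) j0'); apply: (unit_corner_similar_row k0).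
  by rewrite shear_conjE // row0 // add0r eqxx !mul1r.
have AE : A = (A 0 0)%:M.
  apply/matrixP => r c; rewrite mxE.
  have [->|r0] := eqVneq r 0.
    have [->|c0] := eqVneq c 0; first by rewrite mulr1n.
    by rewrite row0.
  have [->|c0] := eqVneq c 0.
    move: (rest (r, r)); rewrite /= r0 /q eqxx mulr1 negb_or.
    by case/andP => _ /negPn/eqP ->; rewrite (negbTE r0).
  move: (rest (r, c)); rewrite /= r0 c0 negb_or /p.
  by case/andP => /negPn/eqP/subr0_eq -> _; rewrite mulr_natr.
exists 1%:M, A; split; rewrite ?unitmx1 ?mul1mx ?mulmx1 //.
move: detA; rewrite {1}AE det_scalar normrX => /eqP.
by rewrite pexpr_eq1 // => /eqP.
Qed.

Definition cayley_point (m : nat) : C := (m%:R + 'i) / (m%:R - 'i).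

Lemma conj_cayley_num m : (m%:R + 'i : C)^* = m%:R - 'i.
Proof. by rewrite rmorphD /= conjCi rmorph_nat. Qed.

Lemma cayley_num_neq0 m : (m%:R + 'i : C) != 0.
Proof.
have norm2 : (m%:R + 'i) * (m%:R - 'i) = (m ^ 2).+1%:R :> C.
  by rewrite -addn1 natrD natrX mulrDl !mulrBr -expr2 sqrCi; ring.
by apply/eqP => w0; move: norm2; rewrite w0 mul0r => /eqP; rewrite eq_sym pnatr_eq0.
Qed.

Lemma norm_cayley_point m : `|cayley_point m| = 1.
Proof.
rewrite /cayley_point -conj_cayley_num normf_div norm_conjC divff //.
by rewrite normr_eq0 cayley_num_neq0.
Qed.

Lemma cayley_point_inj : injective cayley_point.
Proof.
move=> m k /eqP; rewrite /cayley_point -!conj_cayley_num.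
rewrite eqr_div ?conjC_eq0 ?cayley_num_neq0 // !conj_cayley_num => /eqP h.
have : 2 * 'i * (k%:R - m%:R) = 0 :> C.
  by rewrite -(subrr ((m%:R + 'i) * (k%:R - 'i))) {2}h; ring.
move/eqP; rewrite !mulf_eq0 pnatr_eq0 (negbTE (neq0Ci C)) /= subr_eq0 eqr_nat.
by move/eqP.
Qed.

Lemma exists_unimodular_notin (s : seq C) : exists z : C, `|z| = 1 /\ z \notin s.
Proof.
have [/allP sub|/allPn [z /mapP [m _ ->] zs]] :=
  boolP (all (mem s) (map cayley_point (iota 0 (size s).+1))).
  have := uniq_leq_size _ sub.
  rewrite map_inj_uniq ?iota_uniq //; last exact: cayley_point_inj.
  by rewrite size_map size_iota ltnn => /(_ isT).
by exists (cayley_point m); rewrite norm_cayley_point.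
Qed.

Definition unimodular_trig n (L : 'M[C]_n) :=
  [/\ is_trig_mx L, forall i, `|L i i| = 1 & injective (fun i => L i i)].

Definition similar_LU n (A : 'M[C]_n) := exists S L U,
  [/\ S \in unitmx, S *m A = L *m U *m S, unimodular_trig L, unimodular_trig U^T
    & forall i, U i i != 1].

Lemma unimodular_trig_block n (z : C) (Y : 'cV_n) (M : 'M_n) :
  `|z| = 1 -> (forall i, M i i != z) -> unimodular_trig M ->
  unimodular_trig (block_mx z%:M 0 Y M : 'M_(1 + n)).
Proof.
move=> z1 Mz [Mt M1 Minj]; split.
- by rewrite (@is_trig_block_mx _ 1 n 1 n) // eqxx scalar_mx_is_trig.
- move=> i; case: (split_ordP i) => k ->.
    by rewrite (@block_mxEul _ 1 n 1 n) mxE eqxx mulr1n.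
  by rewrite (@block_mxEdr _ 1 n 1 n).
move=> i j; case: (split_ordP i) => i' ->; case: (split_ordP j) => j' ->;
  rewrite ?(@block_mxEul _ 1 n 1 n) ?(@block_mxEdr _ 1 n 1 n) ?mxE ?eqxx ?mulr1n.
- by rewrite !ord1.
- by move=> zM; case/eqP: (Mz j'); rewrite zM.
- by move/eqP; rewrite (negbTE (Mz i')).
- by move/Minj => ->.
Qed.

Lemma similar_LU_similar n (S A B : 'M[C]_n) :
  S \in unitmx -> S *m A = B *m S -> similar_LU B -> similar_LU A.
Proof.
move=> Su SA [S' [L [U [S'u S'B LL UU U1]]]]; exists (S' *m S), L, U; split => //.
  by rewrite unitmx_mul S'u.
by rewrite -mulmxA SA !mulmxA S'B.
Qed.

Lemma block_schur n (a : C) (r : 'rV_n) (c : 'cV_n) (B : 'M_n) : a != 0 ->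
  block_mx a%:M r c B =
  block_mx 1%:M 0 (a^-1 *: c) 1%:M *m block_mx a%:M r 0 (B - a^-1 *: (c *m r)).
Proof.
move=> a0; rewrite mulmx_block !mul1mx !mul0mx !addr0 mul_mx_scalar scalerA mulfV //.
by rewrite scale1r -scalemxAl addrC subrK.
Qed.

Lemma det_block_schur n (a : C) (r : 'rV_n) (c : 'cV_n) (B : 'M_n) : a != 0 ->
  \det (block_mx a%:M r c B : 'M_(1 + n)) = a * \det (B - a^-1 *: (c *m r)).
Proof.
move=> a0; rewrite block_schur // det_mulmx (@det_lblock _ 1 n) (@det_ublock _ 1 n).
by rewrite !det1 det_scalar expr1 !mul1r.
Qed.

Lemma similar_LU_block n (a : C) (r : 'rV_n) (c : 'cV_n) (B : 'M_n) :
  `|a| = 1 -> similar_LU (B - a^-1 *: (c *m r)) ->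
  similar_LU (block_mx a%:M r c B : 'M_(1 + n)).
Proof.
move=> a1 [S [L [U [Su SB LL UU U1]]]].
have a0 : a != 0 by rewrite -normr_eq0 a1 oner_neq0.
have [z [z1]] := exists_unimodular_notin
  (a :: [seq L i i | i : 'I_n] ++ [seq a / U i i | i : 'I_n]).
rewrite inE mem_cat => /norP[za /norP[zL zU]].
have z0 : z != 0 by rewrite -normr_eq0 z1 oner_neq0.
have Lz i : L i i != z by apply: contraNneq zL => <-; apply: image_f.
have Uz i : U^T i i != a / z.
  apply: contraNneq zU; rewrite mxE => Uaz; apply/imageP; exists i => //.
  by rewrite Uaz invf_div mulrCA mulfV ?mulr1.
exists (block_mx 1%:M 0 0 S), (block_mx z%:M 0 ((z / a) *: (S *m c)) L),
  (block_mx (a / z)%:M (z^-1 *: (r *m invmx S)) 0 U); split.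
- by rewrite unitmxE (@det_ublock _ 1 n) det1 mul1r -unitmxE.
- have e_ul : z%:M *m (a / z)%:M = a%:M :> 'M_1.
    by rewrite -scalar_mxM mulrCA mulfV ?mulr1.
  have rS : z^-1 *: (r *m invmx S) *m S = z^-1 *: r.
    by rewrite -scalemxAl; congr (_ *: _); apply: mulmxKV.
  have e_ur : z%:M *m (z^-1 *: (r *m invmx S)) *m S = r.
    by rewrite -mulmxA rS mul_scalar_mx scalerA mulfV // scale1r.
  have e_dl : (z / a) *: (S *m c) *m (a / z)%:M = S *m c.
    by rewrite mul_mx_scalar scalerA -mulrA mulKf // mulfV // scale1r.
  have e_dr :
      ((z / a) *: (S *m c) *m (z^-1 *: (r *m invmx S)) + L *m U) *m S = S *m B.
    rewrite mulmxDl -SB -mulmxA rS -scalemxAl -scalemxAr scalerA mulrAC mulfV //.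
    by rewrite mul1r mulmxBr -scalemxAr mulmxA addrC subrK.
  rewrite !(@mulmx_block _ 1 n 1 n 1 n) !(mul1mx, mul0mx, mulmx0, mulmx1, addr0, add0r).
  by rewrite e_ul e_ur e_dl e_dr.
- exact: unimodular_trig_block.
- rewrite (@tr_block_mx _ 1 n 1 n) trmx0 tr_scalar_mx.
  by apply: unimodular_trig_block; rewrite // normf_div a1 z1 divr1.
- move=> i; case: (split_ordP i) => k ->.
    rewrite (@block_mxEul _ 1 n 1 n) mxE eqxx mulr1n.
    by apply: contra za => /eqP/(divr1_eq) ->.
  by rewrite (@block_mxEdr _ 1 n 1 n).
Qed.

Lemma similar_LU_of_det n (A : 'M[C]_n) : `|\det A| = 1 -> similar_LU A.
Proof.
elim: n A => [|n IH] A detA.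
  have trig1 : unimodular_trig (1%:M : 'M[C]_0).
    by split; [exact: scalar_mx_is_trig | case | case].
  exists 1%:M, 1%:M, 1%:M; rewrite tr_scalar_mx.
  by split; rewrite ?unitmx1 //; [apply/matrixP => -[] | case].
have [S [B [Su SA B00]]] := unit_corner_similar_of_det detA.
apply: (similar_LU_similar Su SA).
have a0 : B 0 0 != 0 by rewrite -normr_eq0 B00 oner_neq0.
have detB : \det B = \det A.
  have := congr1 determinant SA; rewrite !det_mulmx [RHS]mulrC => /mulfI -> //.
  by rewrite -unitfE -unitmxE.
pose B1 : 'M_(1 + n) := B.
have corner : ulsubmx B1 = (B 0 0)%:M.
  have l0 : lshift n (0 : 'I_1) = 0 :> 'I_n.+1 by apply: val_inj.
  by rewrite [LHS]mx11_scalar !mxE l0.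
have BE : B = block_mx (B 0 0)%:M (ursubmx B1) (dlsubmx B1) (drsubmx B1).
  by rewrite -corner submxK.
rewrite BE; apply: similar_LU_block => //; apply: IH.
by move: detA; rewrite -detB [in LHS]BE det_block_schur // normrM B00 mul1r.
Qed.

Definition unimodular_diagonalizable n (X : 'M[C]_n) :=
  exists P d, [/\ P \in unitmx, P *m X = diag_mx d *m P & forall i, `|d 0 i| = 1].

Lemma unimodular_diagonalizable_split n (M : 'M[C]_n) (f : 'I_n -> C) :
  injective f -> (forall i, `|f i| = 1) -> char_poly M = \prod_i ('X - (f i)%:P) ->
  unimodular_diagonalizable M.
Proof.
case: n M f => [|n] M f finj f1 charM.
  by exists 1%:M, 0; split; rewrite ?unitmx1 //; [apply/matrixP => -[] | case].
have {}charM : char_poly M = \prod_(x <- [seq f i | i : 'I_n.+1]) ('X - x%:P).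
  by rewrite charM big_image.
have : diagonalizable M.
  apply/diagonalizableP; exists [seq f i | i : 'I_n.+1].
    by rewrite map_inj_uniq ?enum_uniq.
  by rewrite -charM mxminpoly_dvd_char.
case=> P Pu /similar_diagPex [d /(similarP Pu) PM].
exists P, d; split => // j.
have : eigenvalue M (d 0 j).
  apply/eigenvalueP; exists (row j P).
    by rewrite -row_mul PM row_mul row_diag_mx -scalemxAl -rowE.
  apply/eqP => Pj0; have := congr1 (mulmx^~ (invmx P)) Pj0.
  rewrite /= -row_mul mulmxV // row1 mul0mx => /matrixP/(_ 0 j).
  by rewrite !mxE !eqxx /= => /eqP; rewrite oner_eq0.
by rewrite eigenvalue_root_char charM root_prod_XsubC => /imageP[i _ ->].
Qed.

Lemma unimodular_diagonalizable_conj n (S X : 'M[C]_n) : S \in unitmx ->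
  unimodular_diagonalizable X -> unimodular_diagonalizable (invmx S *m X *m S).
Proof.
move=> Su [P [d [Pu PX d1]]]; exists (P *m S), d; split => //.
  by rewrite unitmx_mul Pu.
by rewrite !mulmxA (mulmxK Su) PX -mulmxA.
Qed.

Lemma unimodular_diagonalizable_factor n (A : 'M[C]_n) : `|\det A| = 1 ->
  exists X Y, [/\ A = X *m Y, unimodular_diagonalizable X, unimodular_diagonalizable Y
    & (1%:M - Y) \in unitmx].
Proof.
move=> /similar_LU_of_det [S [L [U [Su SA [Lt L1 Linj] [Ut U1 Uinj] Un1]]]].
exists (invmx S *m L *m S), (invmx S *m U *m S); split.
- by rewrite -[A](mulKmx Su) SA !mulmxA (mulmxK Su).
- apply: unimodular_diagonalizable_conj Su _.
  exact: unimodular_diagonalizable_split Linj L1 (char_poly_trig Lt).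
- apply: unimodular_diagonalizable_conj Su _.
  apply: unimodular_diagonalizable_split Uinj U1 _.
  by rewrite -char_poly_trmx char_poly_trig.
have -> : 1%:M - invmx S *m U *m S = invmx S *m (1%:M - U) *m S.
  by rewrite mulmxBr mulmxBl mulmx1 (mulVmx Su).
rewrite !unitmx_mul unitmx_inv Su andbT /= -unitmx_tr unitmxE det_trig.
  by rewrite unitfE; apply/prodf_neq0 => i _; rewrite !mxE eqxx subr_eq0 eq_sym.
apply/is_trig_mxP => i j ij; move/is_trig_mxP: Ut => /(_ i j ij).
rewrite !mxE => ->; rewrite subr0.
by have /negbTE -> : j != i by rewrite -val_eqE /= gtn_eqF.
Qed.

End NumClosedFieldMatrices.

Lemma coninvolution_prod2_diagonalizable (R : realType) n (X : 'M[R[i]]_n) (u : 'cV_n) :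
  unimodular_diagonalizable X -> coninvolution_prod2 ((X, (1%:M - X) *m u) : aff R n).
Proof.
move=> [P [d [Pu PX d1]]].
have XE : X = invmx P *m diag_mx d *m P by rewrite -mulmxA -PX mulKmx.
have -> : (X, (1%:M - X) *m u) =
    aff_mul (invmx P, u) (aff_mul (diag_mx d, 0) (aff_inv (invmx P, u))).
  rewrite /aff_mul /aff_inv /= invmxK addr0 mulmxA -XE; congr pair.
  by rewrite mulmxBl mul1mx !mulmxN !mulmxA -XE addrC.
apply: coninvolution_prod2_conjg; first by rewrite /in_Aff unitmx_inv.
exact: diag_coninvolution.
Qed.

Theorem theorem3 (R : realType) (n : nat) (g : aff R n) :
  in_Aff g -> `|\det g.1| = 1 ->
  exists hs : seq (aff R n),
    [/\ (size hs <= 4)%N,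
        (forall h, h \in hs -> in_Aff h /\ coninvolution h)
      & aff_prod hs = g].
Proof.
case: g => A v; rewrite /in_Aff /= => Au detA.
have [X [Y [AXY Xd Yd IYu]]] := unimodular_diagonalizable_factor detA.
have Xu : X \in unitmx by move: Au; rewrite AXY unitmx_mul => /andP[].
have [h1 [h2 [c1 c2 h12]]] := coninvolution_prod2_diagonalizable 0 Xd.
have [h3 [h4 [c3 c4 h34]]] :=
  coninvolution_prod2_diagonalizable (invmx (1%:M - Y) *m (invmx X *m v)) Yd.
exists [:: h1; h2; h3; h4]; split => //.
  by move=> h; rewrite !inE => /or4P[]/eqP->; split => //; apply: coninvolution_Aff.
rewrite /aff_prod /= aff_mulg1 (aff_mulA h1) h12 h34 /aff_mul /= mulmx0 addr0.
by rewrite (mulKVmx IYu) (mulKVmx Xu) AXY.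
Qed.
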